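(* Let $n\ge 1$ and let $G_n$ be the graph consisting of two edges $e_l=(x_1,v_l)$ and $e_r=(x_2,v_r)$ connected by an $H_n$, where $x_1,x_2$ are distinct new vertices not in the $H_n$. Then $G_n$ is $(n+1)$-edge-colorable, but every edge coloring of $G_n$ in which $e_l$ and $e_r$ receive different colors uses at least $n+2$ colors.
   Context: For $n\ge1$, the graph $H_n$ consists of a complete bipartite graph $K_{n,n}$ with bipartition $(L,R)$, $|L|=|R|=n$, together with two further vertices $v_l,v_r$ and the edges $(v_l,v)$ for all $v\in L$ and $(v_r,v)$ for all $v\in R$; $v_l$ is its leftmost vertex and $v_r$ its rightmost vertex. Two edges $(x_1,y_1)$ and $(x_2,y_2)$ are connected by an $H_n$ if $y_1$ is the leftmost and $y_2$ the rightmost vertex of the same copy of $H_n$, and neither $x_1$ nor $x_2$ belongs to that copy. A graph is $k$-edge-colorable if it has a proper edge coloring with at most $k$ colors. *)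

From mathcomp Require Import all_boot.
Set Implicit Arguments. Unset Strict Implicit. Unset Printing Implicit Defensive.

(* Vertices of G_n:  inl (inl i) = i-th vertex of L,  inl (inr j) = j-th vertex of R,
   inr 0 = x1, inr 1 = v_l, inr 2 = v_r, inr 3 = x2. *)
Definition Vn (n : nat) : finType := (('I_n + 'I_n) + 'I_4)%type.

Definition x1 {n} : Vn n := inr (@Ordinal 4 0 isT).
Definition vl {n} : Vn n := inr (@Ordinal 4 1 isT).
Definition vr {n} : Vn n := inr (@Ordinal 4 2 isT).
Definition x2 {n} : Vn n := inr (@Ordinal 4 3 isT).

(* One orientation of every edge of G_n. *)
Definition Gbase n (u v : Vn n) : bool :=
  match u, v with
  | inl (inl _), inl (inr _) => true                       (* K_{n,n} between L and R *)
  | inr a, inl (inl _) => val a == 1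
  | inr a, inl (inr _) => val a == 2
  | inr a, inr b => ((val a == 0) && (val b == 1))
                 || ((val a == 3) && (val b == 2))
  | _, _ => false
  end.

Definition Gadj n : rel (Vn n) := fun u v => Gbase u v || Gbase v u.

(* A proper edge coloring of the simple graph (V, adj) with colors in 'I_k:
   c is read on ordered pairs, must be symmetric on edges, and any two
   distinct edges sharing an endpoint get different colors. *)
Definition edge_coloring (V : finType) (adj : rel V) (k : nat) (c : V -> V -> 'I_k) : Prop :=
  (forall x y, adj x y -> c x y = c y x) /\
  (forall x y z, adj x y -> adj x z -> y != z -> c x y != c x z).

From mathcomp Require Import all_boot ssralg zmodp zify.

Set Implicit Arguments.
Unset Strict Implicit.
Unset Printing Implicit Defensive.

(* Upper bound: label L_i and R_j by i and j, and v_l, v_r, x1, x2 by n, all in Z/(n+1);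
   coloring every edge by the sum of its endpoint labels is proper because the labels
   are injective on each neighbourhood.
   Lower bound: with n+1 colors every vertex of degree n+1 sees every color.  Let a be
   the color of e_l.  No edge v_l L_i has color a, so each L_i has an a-colored edge to
   some R_{f(i)}; as color classes are matchings f is a bijection, so v_r cannot have an
   a-colored edge into R and must give color a to e_r. *)

Import GRing.Theory.

Section EdgeColoring.

Variables (V : finType) (adj : rel V).

Lemma edge_coloring_nbr_inj k (c : V -> V -> 'I_k) (x y z : V) :
  edge_coloring adj c -> adj x y -> adj x z -> c x y = c x z -> y = z.
Proof.
move=> [_ c_proper] xy xz cyz.
by apply: contraNeq (c_proper _ _ _ xy xz) _; rewrite cyz eqxx.
Qed.

Lemma edge_coloring_nbr_onto k (c : V -> V -> 'I_k) (x : V) (T : finType) (nb : T -> V) :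
  edge_coloring adj c -> (forall t, adj x (nb t)) -> injective nb -> k <= #|T| ->
  forall a, exists t, c x (nb t) = a.
Proof.
move=> col adj_nb nb_inj leq_kT a.
have c_inj : injective (fun t => c x (nb t)).
  by move=> t t' /(edge_coloring_nbr_inj col (adj_nb t) (adj_nb t')) /nb_inj.
have card_k : #|'I_k| <= #|T| by rewrite card_ord.
by have /codomP [t ->] := inj_card_onto c_inj card_k a; exists t.
Qed.

Lemma sum_labels_edge_coloring k (f : V -> 'I_k.+1) :
  (forall x y z, adj x y -> adj x z -> f y = f z -> y = z) ->
  edge_coloring adj (fun x y => (f x + f y)%R).
Proof.
move=> f_inj; split=> [x y _|x y z xy xz]; first exact: addrC.
by apply: contra => /eqP /addrI /(f_inj _ _ _ xy xz) ->.
Qed.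

End EdgeColoring.

Definition lvert n (i : 'I_n) : Vn n := inl (inl i).
Definition rvert n (j : 'I_n) : Vn n := inl (inr j).

Definition label n (v : Vn n) : 'I_n.+1 :=
  match v with
  | inl (inl i) | inl (inr i) => widen_ord (leqnSn n) i
  | inr _ => ord_max
  end.

Lemma label_inj_nbr n (x y z : Vn n) :
  Gadj x y -> Gadj x z -> label y = label z -> y = z.
Proof.
rewrite /Gadj; case: x y z => [[i|j]|a] [[i'|j']|b] [[i''|j'']|c] //= xy xz.
all: move=> /(congr1 val) /= yz.
all: try by [rewrite yz | congr (inl (inl _)); exact: val_inj
            | congr (inl (inr _)); exact: val_inj].
all: try by [move: (ltn_ord i'); rewrite yz ltnn | move: (ltn_ord j'); rewrite yz ltnn
            | move: (ltn_ord i''); rewrite -yz ltnn | move: (ltn_ord j''); rewrite -yz ltnn].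
all: try (exfalso; lia).
all: congr inr; apply: val_inj; move: xy xz => /=; lia.
Qed.

Lemma Gadj_sum_labels_coloring n :
  edge_coloring (@Gadj n) (fun u v => (label u + label v)%R).
Proof. exact/sum_labels_edge_coloring/label_inj_nbr. Qed.

Lemma oapp_rvert_inj n (a : 'I_4) : injective (oapp (@rvert n) (inr a)).
Proof. by move=> [j|] [j'|] //= [->]. Qed.

Section LowerBound.

Variables (n k : nat) (c : Vn n -> Vn n -> 'I_k).
Hypotheses (col : edge_coloring (@Gadj n) c) (leq_k : k <= n.+1).

Lemma nbr_onto_option (x : Vn n) (nb : option 'I_n -> Vn n) :
  (forall t, Gadj x (nb t)) -> injective nb -> forall a, exists t, c x (nb t) = a.
Proof.
move=> adj_nb nb_inj; apply: (edge_coloring_nbr_onto col adj_nb nb_inj).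
by rewrite card_option card_ord.
Qed.

Lemma lvert_rvert_color i : exists j, c (lvert i) (rvert j) = c x1 vl.
Proof.
have adj_nb t : Gadj (lvert i) (oapp (@rvert n) vl t) by case: t.
have [[j|] /= cij] := nbr_onto_option adj_nb (@oapp_rvert_inj n _) (c x1 vl).
  by exists j.
have /(edge_coloring_nbr_inj col) : c vl (lvert i) = c vl x1.
  by rewrite -col.1 // cij col.1.
by move/(_ isT isT).
Qed.

Lemma vr_rvert_color : c x1 vl != c x2 vr -> exists j, c vr (rvert j) = c x1 vl.
Proof.
have adj_nb t : Gadj vr (oapp (@rvert n) x2 t) by case: t.
have [[j|] /= cj] := nbr_onto_option adj_nb (@oapp_rvert_inj n _) (c x1 vl).
  by exists j.
by rewrite -cj col.1 // eqxx.
Qed.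

Lemma end_edges_same_color : c x1 vl = c x2 vr.
Proof.
case: (eqVneq (c x1 vl) (c x2 vr)) => // /vr_rvert_color [j0 c_vr]; exfalso.
have /fin_all_exists [f cf] := lvert_rvert_color.
have rvert_lvert i : c (rvert (f i)) (lvert i) = c x1 vl by rewrite -col.1 ?cf.
have f_inj : injective f.
  move=> i i' fii'.
  have /(edge_coloring_nbr_inj col) : c (rvert (f i)) (lvert i) = c (rvert (f i)) (lvert i').
    by rewrite rvert_lvert fii' rvert_lvert.
  by move/(_ isT isT) => [].
have /codomP [i def_j0] := inj_card_onto f_inj (leqnn _) j0.
rewrite {}def_j0 in c_vr.
have /(edge_coloring_nbr_inj col) : c (rvert (f i)) (lvert i) = c (rvert (f i)) vr.
  by rewrite rvert_lvert -c_vr col.1.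
by move/(_ isT isT).
Qed.

End LowerBound.

Theorem lemma2 (n : nat) (hn : 1 <= n) :
  (exists c : Vn n -> Vn n -> 'I_n.+1, edge_coloring (@Gadj n) c) /\
  (forall (k : nat) (c : Vn n -> Vn n -> 'I_k),
      edge_coloring (@Gadj n) c -> c x1 vl != c x2 vr -> n.+2 <= k).
Proof.
split; first by exists (fun u v => (label u + label v)%R); exact: Gadj_sum_labels_coloring.
move=> k c col; rewrite ltnNge; apply: contra => leq_k.
by rewrite (end_edges_same_color col leq_k).
Qed.
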